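(* Consider the perturbed federated algorithm described in the context, with $\beta\in(0,1)$. Assume that the bounded variance, bounded stochastic gradient norm and $L$-smoothness assumptions hold. Then for every round $t\ge0$ and every pair of clients $i,j$, $$\mathbb{E}\|\mathbf{u}^i_t-\mathbf{u}^j_t\|^2\le\mathbb{1}_{t\ge1}\,4\gamma_{t-1}^2E^2G^2.$$
   Context: Setting: there are $C$ clients with local objectives $F_i:\mathbb{R}^D\to\mathbb{R}$. Similarity weights $p_{in}\ge0$ are symmetric, satisfy $p_{ii}=0$, and $\sum_{i,n}p_{in}=1$. Let $p_i=\sum_np_{in}>0$. Algorithm, with parameter $\beta$, $E\ge1$ local steps and step sizes $\gamma_t$, all clients participating: - $\mathbf{u}^i_0=\overline{\mathbf{w}}_{0,0}$. - In round $t$, $\mathbf{w}^i_{t,0}=\overline{\mathbf{w}}_{t,0}$. For $k=0,\dots,E-1$, $\widetilde{\mathbf{w}}^i_{t,k}=\beta\mathbf{w}^i_{t,k}+(1-\beta)\mathbf{u}^i_t$ and $\mathbf{w}^i_{t,k+1}=\mathbf{w}^i_{t,k}-\gamma_tg_i(\widetilde{\mathbf{w}}^i_{t,k})$, with stochastic gradients $g_i$ of $F_i$ sampled independently given the past. - $\overline{\mathbf{w}}_{t,k}=\sum_ip_i\mathbf{w}^i_{t,k}$ and $\overline{\mathbf{w}}_{t+1,0}=\overline{\mathbf{w}}_{t,E}$. - For $t\ge1$, $\mathbf{u}^i_t=\frac1{p_i}\sum_np_{in}\mathbf{w}^n_{t-1,E}$. Assumptions: - Unbiasedness: $\mathbb{E}\,g_i(\widetilde{\mathbf{w}}^i_{t,k})=\nabla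 F_i(\widetilde{\mathbf{w}}^i_{t,k})$. - Variance: $\mathbb{E}\|g_i(\widetilde{\mathbf{w}}^i_{t,k})-\nabla F_i(\widetilde{\mathbf{w}}^i_{t,k})\|^2\le\sigma^2$. - Bounded second moment: $\mathbb{E}\|g_i(\widetilde{\mathbf{w}}^i_{t,k})\|^2\le G^2$. - Each $\nabla F_i$ is $L$-Lipschitz. $\mathbb{E}$ is total expectation. *)

From HB Require Import structures.
From mathcomp Require Import all_boot all_order all_algebra.
From mathcomp Require Import all_classical all_reals all_analysis.
Set Implicit Arguments. Unset Strict Implicit. Unset Printing Implicit Defensive.
Import Order.TTheory GRing.Theory Num.Theory.
Local Open Scope ring_scope.

Definition dotv (R : realType) (D : nat) (x y : 'rV[R]_D) : R :=
  \sum_(a < D) x 0 a * y 0 a.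
Definition sqnorm (R : realType) (D : nat) (x : 'rV[R]_D) : R := dotv x x.
Definition enorm (R : realType) (D : nat) (x : 'rV[R]_D) : R := Num.sqrt (sqnorm x).

Section Algo.
Variables (R : realType) (T : Type) (C D : nat).
Variables (p : 'I_C -> 'I_C -> R)
          (beta : R) (E : nat) (gamma : nat -> R) (w0 : 'rV[R]_D)
          (g : 'I_C -> nat -> nat -> T -> 'rV[R]_D).
  (* g i t k x = realised stochastic gradient g_i(wtilde^i_{t,k}) of client i,
     round t, local step k, at sample point x *)
Variable x : T.

Definition pw (i : 'I_C) : R := \sum_(n < C) p i n.

(* prev = None for round 0, Some (w^n_{t-1,E})_n for round t >= 1 *)
Definition start_of (prev : option ('I_C -> 'rV[R]_D)) : 'rV[R]_D :=
  match prev with None => w0 | Some e => \sum_(i < C) pw i *: e i end.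
Definition u_of (prev : option ('I_C -> 'rV[R]_D)) (i : 'I_C) : 'rV[R]_D :=
  match prev with
  | None => w0
  | Some e => (pw i)^-1 *: \sum_(n < C) p i n *: e n end.

Fixpoint local (t : nat) (prev : option ('I_C -> 'rV[R]_D)) (i : 'I_C) (k : nat)
  : 'rV[R]_D :=
  match k with
  | 0 => start_of prev
  | k'.+1 => local t prev i k' - gamma t *: g i t k' x
  end.

Fixpoint ends (t : nat) : 'I_C -> 'rV[R]_D :=
  let prev := match t with 0 => None | t'.+1 => Some (ends t') end in
  fun i => local t prev i E.

Definition prev_of (t : nat) : option ('I_C -> 'rV[R]_D) :=
  match t with 0 => None | t'.+1 => Some (ends t') end.

Definition wbar (t : nat) : 'rV[R]_D := start_of (prev_of t).
Definition u (t : nat) (i : 'I_C) : 'rV[R]_D := u_of (prev_of t) i.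
Definition w (t : nat) (i : 'I_C) (k : nat) : 'rV[R]_D := local t (prev_of t) i k.
Definition wtilde (t : nat) (i : 'I_C) (k : nat) : 'rV[R]_D :=
  beta *: w t i k + (1 - beta) *: u t i.
End Algo.

(** Every client starts round [t] from the same model [wbar_t], so after the
    round [u^i_(t+1) = wbar_t - gamma_t M_i], where [M_i] is the [p_(i.)/p_i]
    convex combination of the clients' summed stochastic gradients
    [S_n = sum_(k < E) g_(n,t,k)].  Hence
    [|u^i_(t+1) - u^j_(t+1)|^2 <= 2 gamma_t^2 (|M_i|^2 + |M_j|^2)], and Jensen's
    inequality for the convex combination together with
    [|S_n|^2 <= E sum_k |g_(n,t,k)|^2] bound the expectation of each
    [|M_i|^2] by [E^2 G^2].
    In round [0] all [u^i_0] coincide. *)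

From HB Require Import structures.
From mathcomp Require Import all_boot all_order all_algebra.
From mathcomp Require Import all_classical all_reals all_analysis measurable_realfun.
From mathcomp Require Import ring lra.
Import Order.TTheory GRing.Theory Num.Theory.
Local Open Scope ring_scope.
Set Implicit Arguments. Unset Strict Implicit. Unset Printing Implicit Defensive.

Section SquaredNorm.
Variables (R : realType) (D : nat).
Implicit Types v w : 'rV[R]_D.

Lemma sqnorm_ge0 v : 0 <= sqnorm v.
Proof. by apply: sumr_ge0 => a _; rewrite -expr2 sqr_ge0. Qed.

Lemma sqnorm0 : sqnorm (0 : 'rV[R]_D) = 0.
Proof. by rewrite /sqnorm /dotv big1 // => a _; rewrite mxE mul0r. Qed.

Lemma sqnormZ c v : sqnorm (c *: v) = c ^+ 2 * sqnorm v.
Proof.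
by rewrite /sqnorm /dotv mulr_sumr; apply: eq_bigr => a _; rewrite !mxE; ring.
Qed.

Lemma sqnormB_le v w : sqnorm (v - w) <= 2 * sqnorm v + 2 * sqnorm w.
Proof.
rewrite /sqnorm /dotv !mulr_sumr -big_split /=; apply: ler_sum => a _.
rewrite !mxE; have := sqr_ge0 (v 0 a + w 0 a); nra.
Qed.

Lemma sqr_convex_sum_le (I : finType) (q y : I -> R) :
  (forall n, 0 <= q n) -> \sum_n q n = 1 ->
  (\sum_n q n * y n) ^+ 2 <= \sum_n q n * y n ^+ 2.
Proof.
move=> q_ge0 q_sum1; set m := \sum_n q n * y n.
have var_ge0 : 0 <= \sum_n q n * (y n - m) ^+ 2.
  by apply: sumr_ge0 => n _; rewrite mulr_ge0 ?sqr_ge0.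
have var_expand : \sum_n q n * (y n - m) ^+ 2 =
    \sum_n q n * y n ^+ 2 - 2 * m * m + m ^+ 2 * \sum_n q n.
  rewrite (eq_bigr (fun n => q n * y n ^+ 2 + - (2 * m) * (q n * y n) + m ^+ 2 * q n));
    last by move=> n _; ring.
  by rewrite !big_split /= -!mulr_sumr -/m; ring.
by move: var_ge0; rewrite var_expand q_sum1; nra.
Qed.

Lemma sqnorm_convex_sum_le (I : finType) (q : I -> R) (v : I -> 'rV[R]_D) :
  (forall n, 0 <= q n) -> \sum_n q n = 1 ->
  sqnorm (\sum_n q n *: v n) <= \sum_n q n * sqnorm (v n).
Proof.
move=> q_ge0 q_sum1; rewrite /sqnorm /dotv.
under [X in _ <= X]eq_bigr => n _ do rewrite mulr_sumr.
rewrite [X in _ <= X]exchange_big /=; apply: ler_sum => a _.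
rewrite summxE -expr2 (eq_bigr (fun n => q n * v n 0 a)) => [|n _]; last by rewrite mxE.
under [X in _ <= X]eq_bigr => n _ do rewrite -expr2.
exact: sqr_convex_sum_le.
Qed.

Lemma sqnorm_sum_le (N : nat) (v : 'I_N -> 'rV[R]_D) :
  sqnorm (\sum_k v k) <= \sum_k N%:R * sqnorm (v k).
Proof.
case: N v => [|N] v; first by rewrite !big_ord0 sqnorm0.
have N_neq0 : (N.+1%:R : R) != 0 by rewrite pnatr_eq0.
have avg_ge0 : forall k : 'I_N.+1, 0 <= (N.+1%:R : R)^-1 by rewrite invr_ge0.
have avg_sum1 : \sum_(k < N.+1) (N.+1%:R : R)^-1 = 1.
  by rewrite sumr_const card_ord -[_ *+ _]mulr_natr mulVf.
have -> : \sum_k v k = N.+1%:R *: \sum_k N.+1%:R^-1 *: v k.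
  by rewrite -scaler_sumr scalerA divff // scale1r.
rewrite sqnormZ -mulr_sumr.
apply: le_trans (ler_wpM2l (sqr_ge0 _) (sqnorm_convex_sum_le _ avg_ge0 avg_sum1)) _.
by rewrite -mulr_sumr mulrA expr2 -(mulrA N.+1%:R) divff // mulr1.
Qed.

End SquaredNorm.

Section OneRound.
Variables (R : realType) (T : Type) (C D : nat).
Variables (p : 'I_C -> 'I_C -> R) (E : nat) (gamma : nat -> R) (w0 : 'rV[R]_D)
          (g : 'I_C -> nat -> nat -> T -> 'rV[R]_D) (x : T).

Definition local_update (t : nat) (n : 'I_C) : 'rV[R]_D := \sum_(k < E) g n t k x.

Definition mix_weight (i n : 'I_C) : R := (pw p i)^-1 * p i n.

Definition mixed_update (t : nat) (i : 'I_C) : 'rV[R]_D :=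
  \sum_n mix_weight i n *: local_update t n.

Lemma local_sum t prev i k :
  local p gamma w0 g x t prev i k =
  start_of p w0 prev - gamma t *: \sum_(l < k) g i t l x.
Proof.
elim: k => [|k IHk] /=; first by rewrite big_ord0 scaler0 subr0.
by rewrite IHk big_ord_recr /= scalerDr opprD addrA.
Qed.

Lemma u_succ t i : pw p i != 0 ->
  u p E gamma w0 g x t.+1 i =
  wbar p E gamma w0 g x t - gamma t *: mixed_update t i.
Proof.
move=> pi_neq0; rewrite /u /wbar /mixed_update /mix_weight /=.
have ends_t n : ends p E gamma w0 g x t n =
    local p gamma w0 g x t (prev_of p E gamma w0 g x t) n E by case: t.
under eq_bigr => n _ do rewrite ends_t local_sum scalerBr.
rewrite sumrB -scaler_suml -/(pw p i) scalerBr scalerA mulVf // scale1r.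
rewrite !scaler_sumr; congr (_ - _); apply: eq_bigr => n _.
by rewrite !scalerA mulrC.
Qed.

Lemma u_succB t i j : pw p i != 0 -> pw p j != 0 ->
  u p E gamma w0 g x t.+1 i - u p E gamma w0 g x t.+1 j =
  gamma t *: (mixed_update t j - mixed_update t i).
Proof.
move=> pi_neq0 pj_neq0; rewrite !u_succ // scalerBr.
by rewrite opprD opprK addrACA subrr add0r addrC.
Qed.

Section ConvexWeights.
Variable i : 'I_C.
Hypotheses (p_ge0 : forall n, 0 <= p i n) (pi_gt0 : 0 < pw p i).

Lemma mix_weight_ge0 n : 0 <= mix_weight i n.
Proof. by rewrite mulr_ge0 // invr_ge0 ltW. Qed.

Lemma mix_weight_sum1 : \sum_n mix_weight i n = 1.
Proof. by rewrite -mulr_sumr mulVf // lt0r_neq0. Qed.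

Lemma sqnorm_mixed_update_le t :
  sqnorm (mixed_update t i) <= \sum_n mix_weight i n * sqnorm (local_update t n).
Proof. exact: sqnorm_convex_sum_le mix_weight_ge0 mix_weight_sum1. Qed.

End ConvexWeights.
End OneRound.

Section RowMeasurability.
Variables (d : measure_display) (T : measurableType d) (R : realType) (D : nat).
Implicit Types V W : T -> 'rV[R]_D.

Definition measurable_row V := forall a, measurable_fun setT (fun x => V x 0 a).

Lemma measurable_sqnorm V : measurable_row V -> measurable_fun setT (fun x => sqnorm (V x)).
Proof.
move=> mV; apply: (measurable_sum _ (h := fun a x => V x 0 a * V x 0 a)) => a.
exact: measurable_funM.
Qed.

Lemma measurable_rowZ c V : measurable_row V -> measurable_row (fun x => c *: V x).
Proof.
move=> mV a; apply: (eq_measurable_fun (fun x => c * V x 0 a)).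
  by move=> x _; rewrite mxE.
exact: measurable_funM.
Qed.

Lemma measurable_rowB V W :
  measurable_row V -> measurable_row W -> measurable_row (fun x => V x - W x).
Proof.
move=> mV mW a; apply: (eq_measurable_fun (fun x => V x 0 a - W x 0 a)).
  by move=> x _; rewrite !mxE.
exact: measurable_funB.
Qed.

Lemma measurable_row_sum (I : finType) (V : I -> T -> 'rV[R]_D) :
  (forall n, measurable_row (V n)) -> measurable_row (fun x => \sum_n V n x).
Proof.
move=> mV a; apply: (eq_measurable_fun (fun x => \sum_n V n x 0 a)).
  by move=> x _; rewrite summxE.
by apply: measurable_sum => n; exact: mV.
Qed.

End RowMeasurability.

Section Expectation.
Variables (d : measure_display) (T : measurableType d) (R : realType).
Variable mu : {measure set T -> \bar R}.

Lemma integral_le_wsum (I : finType) (f : T -> R) (h : I -> T -> R) (q b : I -> R) :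
  measurable_fun setT f -> (forall x, 0 <= f x) ->
  (forall n, measurable_fun setT (h n)) -> (forall n x, 0 <= h n x) ->
  (forall n, 0 <= q n) -> (forall n, (\int[mu]_x (h n x)%:E <= (b n)%:E)%E) ->
  (forall x, f x <= \sum_n q n * h n x) ->
  (\int[mu]_x (f x)%:E <= (\sum_n q n * b n)%:E)%E.
Proof.
move=> mf f_ge0 mh h_ge0 q_ge0 hb f_le.
have mhE n : measurable_fun setT (fun x => (h n x)%:E) by exact/measurable_EFinP.
have mqhE n : measurable_fun setT (fun x => (q n * h n x)%:E).
  by apply/measurable_EFinP; exact: measurable_funM.
apply: (@le_trans _ _ (\int[mu]_x (\sum_n q n * h n x)%:E)%E).
  apply: ge0_le_integral => //.
  - by move=> x _; rewrite lee_fin.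
  - exact/measurable_EFinP.
  - by apply/measurable_EFinP; apply: measurable_sum => n; exact: measurable_funM.
  - by move=> x _; rewrite lee_fin.
under eq_integral => x _ do rewrite -sumEFin.
rewrite ge0_integral_sum // => [|n x _]; last by rewrite lee_fin mulr_ge0.
rewrite -sumEFin; apply: lee_sum => n _.
under eq_integral => x _ do rewrite EFinM.
rewrite ge0_integralZl_EFin // => [|x _]; last by rewrite lee_fin.
by rewrite EFinM lee_pmul ?lee_fin // integral_ge0 // => x _; rewrite lee_fin.
Qed.

End Expectation.

Section ExpectedMixedUpdate.
Variables (d : measure_display) (T : measurableType d) (R : realType).
Variables (P : probability T R) (C D : nat) (p : 'I_C -> 'I_C -> R) (E : nat).
Variables (g : 'I_C -> nat -> nat -> T -> 'rV[R]_D) (G : R).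
Hypothesis measurable_g : forall n t k a b, measurable_fun setT (fun x => g n t k x a b).
Hypothesis second_moment_g :
  forall n t k, (\int[P]_x (sqnorm (g n t k x))%:E <= (G ^+ 2)%:E)%E.

Lemma measurable_row_g n t k : measurable_row (g n t k).
Proof. by move=> a; exact: measurable_g. Qed.

Lemma measurable_row_local_update t n :
  measurable_row (fun x => local_update E g x t n).
Proof. by apply: measurable_row_sum => k; exact: measurable_row_g. Qed.

Lemma measurable_row_mixed_update t i :
  measurable_row (fun x => mixed_update p E g x t i).
Proof.
apply: measurable_row_sum => n; apply: measurable_rowZ.
exact: measurable_row_local_update.
Qed.

Lemma expectation_sqnorm_local_update_le t n :
  (\int[P]_x (sqnorm (local_update E g x t n))%:E <= (E%:R ^+ 2 * G ^+ 2)%:E)%E.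
Proof.
have -> : E%:R ^+ 2 * G ^+ 2 = \sum_(k < E) E%:R * G ^+ 2.
  by rewrite sumr_const card_ord -mulr_natr; ring.
apply: (integral_le_wsum (mu := P) (h := fun (k : 'I_E) x => sqnorm (g n t k x))).
- exact/measurable_sqnorm/measurable_row_local_update.
- by move=> x; exact: sqnorm_ge0.
- by move=> k; exact/measurable_sqnorm/measurable_row_g.
- by move=> k x; exact: sqnorm_ge0.
- by move=> k; rewrite ler0n.
- by move=> k; exact: second_moment_g.
- by move=> x; exact: sqnorm_sum_le.
Qed.

Lemma expectation_sqnorm_mixed_update_le t i :
  (forall n, 0 <= p i n) -> 0 < pw p i ->
  (\int[P]_x (sqnorm (mixed_update p E g x t i))%:E <= (E%:R ^+ 2 * G ^+ 2)%:E)%E.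
Proof.
move=> p_ge0 pi_gt0.
have -> : E%:R ^+ 2 * G ^+ 2 = \sum_n mix_weight p i n * (E%:R ^+ 2 * G ^+ 2).
  by rewrite -mulr_suml mix_weight_sum1 ?mul1r.
apply: (integral_le_wsum (mu := P) (h := fun n x => sqnorm (local_update E g x t n))).
- exact/measurable_sqnorm/measurable_row_mixed_update.
- by move=> x; exact: sqnorm_ge0.
- by move=> n; exact/measurable_sqnorm/measurable_row_local_update.
- by move=> n x; exact: sqnorm_ge0.
- exact: mix_weight_ge0.
- exact: expectation_sqnorm_local_update_le.
- by move=> x; exact: sqnorm_mixed_update_le.
Qed.

End ExpectedMixedUpdate.

Unset Implicit Arguments. Set Strict Implicit.

Theorem lemma6 (R : realType) (d : measure_display) (T : measurableType d)
  (P : probability T R) (C D : nat)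
  (F : 'I_C -> 'rV[R]_D -> R) (gradF : 'I_C -> 'rV[R]_D -> 'rV[R]_D)
  (p : 'I_C -> 'I_C -> R) (beta : R) (E : nat) (gamma : nat -> R)
  (w0 : 'rV[R]_D) (g : 'I_C -> nat -> nat -> T -> 'rV[R]_D)
  (sigma G L : R) :
  (* similarity weights *)
  (forall i n, 0 <= p i n) ->
  (forall i n, p i n = p n i) ->
  (forall i, p i i = 0) ->
  \sum_(i < C) \sum_(n < C) p i n = 1 ->
  (forall i, 0 < pw p i) ->
  (* algorithm parameters *)
  0 < beta < 1 ->
  (1 <= E)%N ->
  (* gradF i is the gradient of F i *)
  (forall i y, differentiable (F i) y /\
     forall v, 'd (F i) y v = dotv (gradF i y) v) ->
  (* stochastic gradients are random vectors *)
  (forall i t k a b, measurable_fun setT (fun x => g i t k x a b)) ->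
  (* unbiasedness *)
  (forall i t k a,
     (\int[P]_x (g i t k x 0 a)%:E =
      \int[P]_x ((gradF i (wtilde p beta E gamma w0 g x t i k)) 0 a)%:E)%E) ->
  (* bounded variance *)
  (forall i t k,
     (\int[P]_x (sqnorm (g i t k x - gradF i (wtilde p beta E gamma w0 g x t i k)))%:E
      <= (sigma ^+ 2)%:E)%E) ->
  (* bounded second moment *)
  (forall i t k, (\int[P]_x (sqnorm (g i t k x))%:E <= (G ^+ 2)%:E)%E) ->
  (* L-smoothness *)
  (forall i y z, enorm (gradF i y - gradF i z) <= L * enorm (y - z)) ->
  forall (t : nat) (i j : 'I_C),
    (\int[P]_x (sqnorm (u p E gamma w0 g x t i - u p E gamma w0 g x t j))%:E
     <= (if t is t'.+1 then 4 * gamma t' ^+ 2 * (E%:R) ^+ 2 * G ^+ 2 else 0)%:E)%E.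
Proof.
move=> p_ge0 _ _ _ pw_gt0 _ _ _ mg _ _ hG _ [|t] i j.
  by rewrite integral0_eq // => x _; rewrite subrr sqnorm0.
under eq_integral => x _ do rewrite u_succB ?lt0r_neq0 //.
pose M (b : bool) x := mixed_update p E g x t (if b then j else i).
have -> : 4 * gamma t ^+ 2 * E%:R ^+ 2 * G ^+ 2 =
    \sum_(b : bool) 2 * gamma t ^+ 2 * (E%:R ^+ 2 * G ^+ 2).
  by rewrite big_bool /=; ring.
apply: (integral_le_wsum (mu := P) (h := fun b x => sqnorm (M b x))) => [||b|b x|b|b|x].
- apply/measurable_sqnorm/measurable_rowZ/measurable_rowB;
    exact: measurable_row_mixed_update.
- by move=> x; exact: sqnorm_ge0.
- exact/measurable_sqnorm/measurable_row_mixed_update.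
- exact: sqnorm_ge0.
- by rewrite mulr_ge0 ?sqr_ge0.
- exact: expectation_sqnorm_mixed_update_le.
- rewrite big_bool /= sqnormZ.
  have := sqnormB_le (M true x) (M false x); have := sqr_ge0 (gamma t); nra.
Qed.
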